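(* Let $A,B$ be invertible positive bounded linear operators on a complex Hilbert space with $0<A\leq B$. Then $$3(A-B)+BA^{-1}B-AB^{-1}A\geq 0.$$
   Context: An operator $X$ is positive ($X\ge0$) if it is self-adjoint and $\langle x, Xx\rangle\ge0$ for all vectors $x$; $X\le Y$ means $Y-X\ge0$, and $0<A$ means $A$ is positive and invertible. *)

(* A complex Hilbert space is modelled as a vector space V
   (lmodType) over a numeric algebraically closed field C (numClosedFieldType,
   the MathComp abstraction of the complex numbers), equipped with an inner
   product (linear in the 2nd argument, conjugate-symmetric, positive definite)
   for which V is complete w.r.t. the induced norm. *)
From HB Require Import structures.
From mathcomp Require Import all_boot all_order all_algebra.
Set Implicit Arguments. Unset Strict Implicit. Unset Printing Implicit Defensive.
Import Order.TTheory GRing.Theory Num.Theory.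
Local Open Scope ring_scope.

Section Hilbert.
Variables (C : numClosedFieldType) (V : lmodType C) (ip : V -> V -> C).

Record inner_product : Prop := InnerProduct {
  ip_linr : forall (a : C) (x y z : V), ip x (a *: y + z) = a * ip x y + ip x z;
  ip_conj : forall x y : V, ip x y = (ip y x)^*;
  ip_ge0  : forall x : V, 0 <= ip x x;
  ip_eq0  : forall x : V, ip x x = 0 -> x = 0 }.

Definition ipnorm (x : V) : C := sqrtC (ip x x).

Definition complete : Prop :=
  forall u : nat -> V,
    (forall e : C, 0 < e -> exists N : nat, forall m n : nat,
        (N <= m)%N -> (N <= n)%N -> ipnorm (u m - u n) < e) ->
    exists l : V, forall e : C, 0 < e -> exists N : nat, forall n : nat,
        (N <= n)%N -> ipnorm (u n - l) < e.

Definition linear_op (T : V -> V) : Prop :=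
  forall (a : C) (x y : V), T (a *: x + y) = a *: T x + T y.

Definition bounded_op (T : V -> V) : Prop :=
  linear_op T /\ exists M : C, 0 <= M /\ forall x : V, ipnorm (T x) <= M * ipnorm x.

Definition selfadjoint (T : V -> V) : Prop :=
  forall x y : V, ip (T x) y = ip x (T y).

Definition positive_op (T : V -> V) : Prop :=
  selfadjoint T /\ forall x : V, 0 <= ip x (T x).

Definition op_le (S T : V -> V) : Prop := positive_op (fun x => T x - S x).

Definition is_inverse_op (T Ti : V -> V) : Prop :=
  bounded_op Ti /\ cancel T Ti /\ cancel Ti T.

End Hilbert.

(* Put D := B - A and G := A^-1 - B^-1.  Expanding shows that the operator in
   question is the congruence D G D, so it is positive as soon as G is, i.e. as
   soon as inversion reverses the order: from A <= B one gets B^-1 <= A^-1.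
   For the latter, with u := A^-1 z and v := B^-1 z, positivity of A at u - v
   gives <z,u> - <z,v> >= <z,v> - <v,Av>, and the right side is >= 0 by A <= B. *)
From HB Require Import structures.
From mathcomp Require Import all_boot all_order all_algebra.
Set Implicit Arguments. Unset Strict Implicit. Unset Printing Implicit Defensive.
Import Order.TTheory GRing.Theory Num.Theory.
Local Open Scope ring_scope.

Lemma scale3_sandwichE (C : numClosedFieldType) (V : lmodType C) (a b p q : V) :
  3 *: (a - b) + p - q = p - b - (b - a) - (b - a - (a - q)).
Proof.
rewrite scaler_nat !mulrS mulr0n addr0 !opprB !addrA -!addrA.
rewrite [in RHS](addrCA (- q) a) !(addrCA _ p); congr (_ + _).
rewrite [in RHS](addrC (- q)) (addrCA a (- b)); congr (_ + _).
by rewrite !(addrCA _ a).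
Qed.

Section LinearOp.
Variables (C : numClosedFieldType) (V : lmodType C) (T : V -> V).
Hypothesis linT : linear_op T.

Lemma linear_op0 : T 0 = 0.
Proof. by have := linT (-1) 0 0; rewrite scaler0 addr0 scaleN1r addNr. Qed.

Lemma linear_opB x y : T (x - y) = T x - T y.
Proof.
have TN z : T (- z) = - T z.
  by have := linT (-1) z 0; rewrite !scaleN1r !addr0 linear_op0 addr0.
by have := linT 1 x (- y); rewrite !scale1r TN.
Qed.

End LinearOp.

Section InnerProduct.
Variables (C : numClosedFieldType) (V : lmodType C) (ip : V -> V -> C).
Hypothesis hip : inner_product ip.

Lemma iprB x y z : ip x (y - z) = ip x y - ip x z.
Proof.
have ipr0 : ip x 0 = 0.
  by have := ip_linr hip (-1) x 0 0; rewrite scaleN1r addr0 oppr0 mulN1r addNr.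
have iprN w : ip x (- w) = - ip x w.
  by have := ip_linr hip (-1) x w 0; rewrite scaleN1r addr0 ipr0 addr0 mulN1r.
by have := ip_linr hip 1 x y (- z); rewrite scale1r mul1r iprN.
Qed.

Lemma iplB x y z : ip (y - z) x = ip y x - ip z x.
Proof. by rewrite (ip_conj hip y) (ip_conj hip z) [LHS](ip_conj hip) iprB raddfB. Qed.

Lemma selfadjointB (S T : V -> V) : selfadjoint ip S -> selfadjoint ip T ->
  selfadjoint ip (fun x => S x - T x).
Proof. by move=> saS saT x y; rewrite iplB iprB saS saT. Qed.

Lemma selfadjoint_inv (T Ti : V -> V) : selfadjoint ip T -> cancel T Ti ->
  cancel Ti T -> selfadjoint ip Ti.
Proof. by move=> saT TK TiK x y; rewrite -{2}(TiK x) saT TiK. Qed.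

Lemma positive_op_congr (G D : V -> V) : positive_op ip G -> selfadjoint ip D ->
  positive_op ip (fun x => D (G (D x))).
Proof.
move=> [saG G_ge0] saD; split=> [x y|x]; first by rewrite saD saG saD.
by rewrite -saD G_ge0.
Qed.

Lemma positive_op_eq (S T : V -> V) : positive_op ip S ->
  (forall x, S x = T x) -> positive_op ip T.
Proof. by move=> [saS S_ge0] eqST; split=> [x y|x]; rewrite -!eqST. Qed.

Lemma op_le_inv (A B Ai Bi : V -> V) :
  linear_op A -> positive_op ip A -> selfadjoint ip B ->
  cancel A Ai -> cancel Ai A -> cancel B Bi -> cancel Bi B ->
  op_le ip A B -> op_le ip Bi Ai.
Proof.
move=> linA [saA A_ge0] saB AK AiK BK BiK [_ BA_ge0].
split; first exact: selfadjointB (selfadjoint_inv saA AK AiK) (selfadjoint_inv saB BK BiK).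
move=> z; rewrite iprB subr_ge0.
set u := Ai z; set v := Bi z.
have Au : A u = z by rewrite AiK.
have Bv : B v = z by rewrite BiK.
have ip_uz : ip u z = ip z u by rewrite -{1}Au -saA Au.
have ip_vz : ip v z = ip z v by rewrite -{1}Bv -saB Bv.
have ip_uAv : ip u (A v) = ip z v by rewrite -saA Au.
have Av_le : ip v (A v) <= ip z v by rewrite -ip_vz -Bv -subr_ge0 -iprB.
have := A_ge0 (u - v).
rewrite (linear_opB linA) Au iplB !iprB ip_uz ip_vz ip_uAv => uv_ge0.
rewrite -subr_ge0 -(subrK (ip z v - ip v (A v)) (ip z u - ip z v)).
by apply: addr_ge0; last rewrite subr_ge0.
Qed.

End InnerProduct.

Theorem mainTheorem9 (C : numClosedFieldType) (V : lmodType C)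
    (ip : V -> V -> C) (hip : inner_product ip) (hcomplete : complete ip)
    (A B Ai Bi : V -> V)
    (hA : bounded_op ip A) (hB : bounded_op ip B)
    (hApos : positive_op ip A) (hBpos : positive_op ip B)
    (hAi : is_inverse_op ip A Ai) (hBi : is_inverse_op ip B Bi)
    (hAB : op_le ip A B) :
  positive_op ip (fun x => 3 *: (A x - B x) + B (Ai (B x)) - A (Bi (A x))).
Proof.
case: hA hB hAi hBi => [linA _] [linB _] [[linAi _] [AK AiK]] [[linBi _] [BK BiK]].
have le_inv : op_le ip Bi Ai := op_le_inv hip linA hApos hBpos.1 AK AiK BK BiK hAB.
have sandwichE x : 3 *: (A x - B x) + B (Ai (B x)) - A (Bi (A x))
    = B (Ai (B x - A x) - Bi (B x - A x)) - A (Ai (B x - A x) - Bi (B x - A x)).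
  rewrite (linear_opB linAi) (linear_opB linBi) AK BK.
  rewrite !(linear_opB linA) !(linear_opB linB) AiK BiK.
  exact: scale3_sandwichE.
have [saD _] := hAB.
apply: positive_op_eq (positive_op_congr le_inv saD) _ => x.
by rewrite sandwichE.
Qed.
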